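(* Let $\Omega \subset \mathbb{R}^d$ be a bounded domain, let $\mu,\nu$ be Borel probability measures on $\Omega$, let $n\ge1$, and let $\phi:\Omega\to\mathbb{R}$ be a bounded continuous function. Suppose that $\mathcal{J}_1(\phi)\le\mathcal{J}_2(\phi)$ for all empirical measures $\mu_n=\frac1n\sum_{i=1}^n\delta_{X_i}$ and $\nu_n=\frac1n\sum_{i=1}^n\delta_{Y_i}$ with $X_1,\dots,X_n\in\operatorname{supp}(\mu)$ and $Y_1,\dots,Y_n\in\operatorname{supp}(\nu)$, where $\mathcal{J}_1(\phi) = \int_\Omega \phi\,\mathrm{d}\mu_n + \int_\Omega(-\phi)\,\mathrm{d}\nu_n$ and $\mathcal{J}_2(\phi) = \int_\Omega \phi\,\mathrm{d}\mu_n + \int_\Omega \phi^c(\cdot;\mu_n)\,\mathrm{d}\nu_n$. Then $\phi(x)-\phi(y)\le|x-y|$ for all $(x,y)\in\operatorname{supp}(\mu)\times\operatorname{supp}(\nu)$.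
   Context: For a function $\psi:\Omega\to\mathbb{R}$ and a probability measure $\eta$ on $\Omega$, the $c$-transform of $\psi$ on the support of $\eta$ is $\psi^c(y;\eta) := \inf_{x\in\operatorname{supp}(\eta)}\{|x-y| - \psi(x)\}$ for $y\in\Omega$, with $|\cdot|$ the Euclidean norm. *)

From HB Require Import structures.
From mathcomp Require Import all_boot all_order all_algebra.
From mathcomp Require Import all_classical all_reals all_analysis.
Set Implicit Arguments. Unset Strict Implicit. Unset Printing Implicit Defensive.
Import Order.TTheory GRing.Theory Num.Theory.
Import numFieldNormedType.Exports.
Local Open Scope classical_set_scope.
Local Open Scope ring_scope.


Definition BorelRd (R : realType) (d : nat) :=
  g_sigma_algebraType (@open ('rV[R]_d)).

Definition enorm (R : realType) (d : nat) (x : 'rV[R]_d) : R :=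
  Num.sqrt (\sum_(i < d) (x ord0 i) ^+ 2).

Definition bounded_domain (R : realType) (d : nat) (Om : set 'rV[R]_d) : Prop :=
  Om !=set0 /\ open Om /\ connected Om /\ bounded_set Om.

Definition supp (R : realType) (d : nat) (Om : set 'rV[R]_d)
  (eta : {measure set (BorelRd R d) -> \bar R}) : set 'rV[R]_d :=
  [set x | Om x /\ forall U : set 'rV[R]_d, open U -> U x -> (0 < eta U)%E].

(* c-transform of psi on the support S of eta, c(x,y) = |x - y| *)
Definition ctransform (R : realType) (d : nat) (psi : 'rV[R]_d -> R)
  (S : set 'rV[R]_d) (y : 'rV[R]_d) : R :=
  inf [set enorm (x - y) - psi x | x in S].

Definition empirical (R : realType) (d : nat) (n : nat) (X : nat -> BorelRd R d)
  : {measure set (BorelRd R d) -> \bar R} :=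
  mscale (n%:R^-1)%:nng (msum (fun i => \d_(X i)) n).

From HB Require Import structures.
From mathcomp Require Import all_boot all_order all_algebra.
From mathcomp Require Import all_classical all_reals all_analysis.
From mathcomp Require Import lra.
Import Order.TTheory GRing.Theory Num.Theory.
Import numFieldNormedType.Exports.
Local Open Scope classical_set_scope.
Local Open Scope ring_scope.

(* It suffices to test the hypothesis on the constant samples X_i = x and
   Y_i = y: both empirical measures are then Dirac masses, the support of the
   first one is {x}, so phi^c(.; mu_n) = |x - .| - phi x, and the integrals
   evaluate to J_1(phi) = phi x - phi y and J_2(phi) = |x - y|. *)

Lemma open_continuous_measurable_fun_rV (R : realType) (d : nat)
    (D : set 'rV[R]_d) (f : 'rV[R]_d -> R) :
  open D -> {in D, continuous f} -> measurable_fun (D : set (BorelRd R d)) f.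
Proof.
move=> oD cf.
apply: (measurability _ (measurable_realfun.RGenOpens.measurableE R)).
move=> _ [_ [a [b ->]] <-]; apply: sub_sigma_algebra.
rewrite /= openE => z [Dz fz]; apply: filterI; first exact: open_nbhs_nbhs.
by apply: (cf z (mem_set Dz)); apply: open_nbhs_nbhs; split.
Qed.

Lemma continuous_enorm (R : realType) (d : nat) : continuous (@enorm R d).
Proof.
move=> z; apply: continuous_comp; last exact: sqrt_continuous.
have -> : (fun w : 'rV[R]_d => \sum_(i < d) w ord0 i ^+ 2) =
    \sum_(i < d) (fun w : 'rV[R]_d => w ord0 i ^+ 2).
  by apply/funext => w; rewrite fct_sumE.
elim/big_ind: _ => [|g h cg ch|i _]; first exact: cst_continuous.
  exact: continuousD.
have ci : {for z, continuous (fun w : 'rV[R]_d => w ord0 i)}.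
  exact: coord_continuous.
exact: continuousM.
Qed.

Lemma ctransform_set1 (R : realType) (d : nat) (psi : 'rV[R]_d -> R)
    (x : 'rV[R]_d) :
  ctransform psi [set x] = fun y => enorm (x - y) - psi x.
Proof. by apply/funext => y; rewrite /ctransform image_set1 inf1. Qed.

Section EmpiricalCst.
Variables (R : realType) (d n : nat) (z : BorelRd R d).
Hypothesis n_gt0 : (0 < n)%N.

Lemma empirical_cstE (A : set (BorelRd R d)) :
  empirical n (fun _ => z) A = \d_z A.
Proof.
rewrite /empirical /= /mscale /= /msum /= diracE sumEFin -EFinM; congr EFin.
have n_neq0 : n%:R != 0 :> R by rewrite pnatr_eq0 -lt0n.
by rewrite sumr_const card_ord -[X in _ * X]mulr_natr mulrC mulfK.
Qed.

Lemma integral_empirical_cst (D : set (BorelRd R d)) (f : 'rV[R]_d -> R) :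
  measurable D -> measurable_fun D f -> D z ->
  (\int[empirical n (fun _ => z)]_(w in D) (f w)%:E = (f z)%:E)%E.
Proof.
move=> mD mf Dz.
rewrite (eq_measure_integral \d_z); last by move=> A _ _; rewrite empirical_cstE.
rewrite integral_dirac //; last exact/measurable_realfun.measurable_EFinP.
by rewrite diracE mem_set // mul1e.
Qed.

Lemma supp_empirical_cst (Om : set 'rV[R]_d) :
  Om z -> supp Om (empirical n (fun _ => z)) = [set z].
Proof.
move=> Omz; apply/seteqP; split => [w [Omw suppw]|w -> /=].
- apply: contrapT => wz.
  have oCz : open (~` [set z]).
    rewrite openC; apply: accessible_closed_set1.
    exact/hausdorff_accessible/norm_hausdorff.
  have := suppw _ oCz wz; rewrite empirical_cstE diracE memNset ?ltxx //.
  by move=> /(_ erefl).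
- split => // U oU Uz.
  by rewrite empirical_cstE diracE mem_set.
Qed.

End EmpiricalCst.

Theorem theorem3 (R : realType) (d : nat) (Om : set 'rV[R]_d)
  (mu nu : {measure set (BorelRd R d) -> \bar R}) (n : nat)
  (phi : 'rV[R]_d -> R) :
  bounded_domain Om ->
  mu setT = 1%E -> mu Om = 1%E ->
  nu setT = 1%E -> nu Om = 1%E ->
  (1 <= n)%N ->
  {within Om, continuous phi} ->
  (exists M : R, forall x, Om x -> `|phi x| <= M) ->
  (forall X Y : nat -> BorelRd R d,
     (forall i, (i < n)%N -> supp Om mu (X i)) ->
     (forall i, (i < n)%N -> supp Om nu (Y i)) ->
     let mun := empirical n X in
     let nun := empirical n Y in
     (\int[mun]_(x in Om) (phi x)%:E + \int[nun]_(y in Om) (- phi y)%:E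
      <= \int[mun]_(x in Om) (phi x)%:E
         + \int[nun]_(y in Om) (ctransform phi (supp Om mun) y)%:E)%E) ->
  forall x y : 'rV[R]_d, supp Om mu x -> supp Om nu y ->
    phi x - phi y <= enorm (x - y).
Proof.
move=> [_ [oOm _]] _ _ _ _ n_gt0 cphi _ J12 x y sx sy.
rewrite continuous_open_subspace // in cphi.
have int_cst z f : Om z -> {in Om, continuous f} ->
    (\int[empirical n (fun _ => z)]_(w in Om) (f w)%:E = (f z)%:E)%E.
  move=> Omz cf; apply: integral_empirical_cst => //.
    exact: sub_sigma_algebra.
  exact: open_continuous_measurable_fun_rV.
have := J12 (fun _ => x) (fun _ => y) (fun _ _ => sx) (fun _ _ => sy).
have [[Omx _] [Omy _]] := (sx, sy).
cbv zeta; rewrite supp_empirical_cst // ctransform_set1.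
rewrite !int_cst //.
- by rewrite -!EFinD lee_fin; lra.
- move=> w _.
  have cdist : {for w, continuous (fun v : 'rV[R]_d => enorm (x - v))}.
    apply: (continuous_comp (f := fun v : 'rV[R]_d => x - v));
      last exact: continuous_enorm.
    by apply: continuousB; [exact: cst_continuous | exact: cvg_id].
  exact: cvgB cdist (cvg_cst (phi x)).
- by move=> w /cphi; exact: continuousN.
Qed.
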